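(* Let $p$ be a program of the nondeterministic guarded command language and $b,c\subseteq\Sigma$ predicates. Then $b\subseteq\mathsf{awp}(p)(c)$ (i.e. the triple $\{b\}\,p\,\{c\}$ is a valid Lisbon triple) if and only if, in the relational interpretation, $b\,p\,c\,\top = b\,\top$.
   Context: Program states are functions $\sigma:\mathsf{Vars}\to\mathbb{Z}$; $\Sigma$ is the set of all states, and a predicate is a subset of $\Sigma$. Programs are generated by $p ::= \texttt{skip} \mid x:=e \mid p;p \mid \{p\}\,\square\,\{p\} \mid \texttt{if}(g)\{p\}\texttt{else}\{p\} \mid \texttt{while}(g)\{p\}$, where $\square$ is nondeterministic choice. The collecting semantics $[\![p]\!]:\mathcal P(\Sigma)\to\mathcal P(\Sigma)$ is: $[\![\texttt{skip}]\!]S=S$; $[\![x:=e]\!]S=\{\sigma[x\mapsto\sigma(e)]\mid\sigma\in S\}$; $[\![p_1;p_2]\!]=[\![p_2]\!]\circ[\![p_1]\!]$; $[\![\texttt{if}(g)\{p_1\}\texttt{else}\{p_2\}]\!]S=[\![p_1]\!](S\cap g)\cup[\![p_2]\!](S\cap\overline g)$; $[\![\texttt{while}(g)\{p\}]\!]S=\overline g\cap\mathrm{lfp}\,X.\,(S\cup[\![p]\!](X\cap g))$; $[\![\{p_1\}\square\{p_2\}]\!]S=[\![p_1]\!]S\cup[\![p_2]\!]S$. Write $[\![p]\!](\sigma)=[\![p]\!]\{\sigma\}$. The angelic weakest precondition is $\mathsf{awp}(p)(c)=\{\sigma\mid [\![p]\!](\sigma)\cap c\neq\emptyset\}$. Relational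 interpretation (Kleene algebra with top and tests over the relations on $\Sigma$): the program $p$ denotes the relation $\{(\sigma,\tau)\mid\tau\in[\![p]\!](\sigma)\}\subseteq\Sigma\times\Sigma$; a predicate (test) $b$ denotes the partial identity $\{(\sigma,\sigma)\mid\sigma\in b\}$; juxtaposition denotes relational composition ($RS=\{(\sigma,\rho)\mid\exists\tau.\,(\sigma,\tau)\in R,(\tau,\rho)\in S\}$); $\top=\Sigma\times\Sigma$ is the universal relation. *)

From Stdlib Require Import ZArith Arith.

Definition Var := nat.
Definition state := Var -> Z.
Definition pred := state -> Prop.

Definition upd (s : state) (x : Var) (v : Z) : state :=
  fun y => if Nat.eqb y x then v else s y.

(* Expressions and guards are given semantically: an expression denotes a
   function state -> Z (sigma(e)), a guard denotes a predicate. *)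
Inductive prog : Type :=
| Skip : prog
| Assign : Var -> (state -> Z) -> prog
| Seq : prog -> prog -> prog
| Choice : prog -> prog -> prog
| If : pred -> prog -> prog -> prog
| While : pred -> prog -> prog.

(* Least fixpoint on P(Sigma) (Knaster-Tarski: intersection of prefixed points). *)
Definition lfp (F : pred -> pred) : pred :=
  fun s => forall X : pred, (forall t, F X t -> X t) -> X s.

Fixpoint sem (p : prog) (S : pred) : pred :=
  match p with
  | Skip => S
  | Assign x e => fun t => exists s, S s /\ t = upd s x (e s)
  | Seq p1 p2 => sem p2 (sem p1 S)
  | Choice p1 p2 => fun t => sem p1 S t \/ sem p2 S t
  | If g p1 p2 => fun t =>
      sem p1 (fun s => S s /\ g s) t \/ sem p2 (fun s => S s /\ ~ g s) t
  | While g body => fun t =>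
      ~ g t /\ lfp (fun X => fun s => S s \/ sem body (fun u => X u /\ g u) s) t
  end.

Definition sem1 (p : prog) (s : state) : pred := sem p (fun u => u = s).

Definition awp (p : prog) (c : pred) : pred :=
  fun s => exists t, sem1 p s t /\ c t.

Definition rel := state -> state -> Prop.
Definition rel_of (p : prog) : rel := fun s t => sem1 p s t.
Definition test (b : pred) : rel := fun s t => s = t /\ b s.
Definition rcomp (R S : rel) : rel := fun s r => exists t, R s t /\ S t r.
Definition rtop : rel := fun _ _ => True.
Definition rel_eq (R S : rel) : Prop := forall s t, R s t <-> S s t.


(* The theorem holds for every relation R in place of the denotation of p:
   the states related by [b R c ⊤] to anything are exactly the b-states having
   an R-successor in c, while [b ⊤] relates every b-state to everything. *)

Lemma rcomp_test_rtop (b : pred) (s r : state) :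
  rcomp (test b) rtop s r <-> b s.
Proof.
  unfold rcomp, test, rtop; split.
  - intros [t [[-> Hb] _]]; exact Hb.
  - intros Hb; exists s; auto.
Qed.

Lemma rcomp_test_rel_test_rtop (b c : pred) (R : rel) (s r : state) :
  rcomp (rcomp (rcomp (test b) R) (test c)) rtop s r
  <-> b s /\ exists t, R s t /\ c t.
Proof.
  unfold rcomp, test, rtop; split.
  - intros [t [[u [[v [[-> Hb] HR]] [-> Hc]]] _]]; eauto.
  - intros [Hb [t [HR Hc]]].
    exists t; split; [| exact I].
    exists t; split; [| auto].
    exists s; auto.
Qed.

Lemma rel_eq_test_rel_test_rtop (b c : pred) (R : rel) :
  (forall s, b s -> exists t, R s t /\ c t) <->
  rel_eq (rcomp (rcomp (rcomp (test b) R) (test c)) rtop) (rcomp (test b) rtop).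
Proof.
  unfold rel_eq; split.
  - intros Hdom s r.
    rewrite rcomp_test_rel_test_rtop, rcomp_test_rtop.
    split; [intros [Hb _] | intros Hb; split]; auto.
  - intros Heq s Hb.
    assert (Hbcr : rcomp (rcomp (rcomp (test b) R) (test c)) rtop s s)
      by (apply Heq, rcomp_test_rtop, Hb).
    apply rcomp_test_rel_test_rtop in Hbcr.
    exact (proj2 Hbcr).
Qed.

Theorem mainTheorem7 (p : prog) (b c : pred) :
  (forall s, b s -> awp p c s) <->
  rel_eq (rcomp (rcomp (rcomp (test b) (rel_of p)) (test c)) rtop)
         (rcomp (test b) rtop).
Proof.
  exact (rel_eq_test_rel_test_rtop b c (rel_of p)).
Qed.
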